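(* Let $\alpha_1,\alpha_2,\tau\ge0$. Let $\mathcal H$ be an $n$-vertex linear hypergraph in which every edge has size at least $1+\alpha_2$. Let $e\in\mathcal H$, $r:=|e|$, $m_1 := |\{f\in N(e): |f|\ge(1+\alpha_1)r\}|$ and $m_2 := |\{f\in N(e): (1+\alpha_1)r>|f|\ge r/(1+\alpha_2)\}|$. If $r>1+\alpha_2$, then (i) $(1+\alpha_1)m_1 + \frac{m_2}{1+\alpha_2} \le n + \frac{(1+\alpha_2)n}{r-1-\alpha_2}$. Moreover, if in addition $m_1+m_2\ge(1-\tau)n$ and $\alpha_1>0$, then (ii) $m_1 \le \left(\tau + \frac{(1+\alpha_2)(1+\alpha_2 r)}{r-1-\alpha_2}\right)\frac{n}{\alpha_1}$.
   Context: A hypergraph has a finite vertex set and a set of nonempty edges; linear means any two distinct edges share at most one vertex. $N(e)$ denotes the set of edges $f\ne e$ with $f\cap e\ne\varnothing$. *)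

From HB Require Import structures.
From mathcomp Require Import all_boot all_order all_algebra.
Set Implicit Arguments. Unset Strict Implicit. Unset Printing Implicit Defensive.

Definition hypergraph (V : finType) (E : {set {set V}}) : Prop :=
  forall e, e \in E -> e != set0.

Definition linear_hypergraph (V : finType) (E : {set {set V}}) : Prop :=
  hypergraph E /\
  forall e f, e \in E -> f \in E -> e != f -> #|e :&: f| <= 1.

Definition nbhd (V : finType) (E : {set {set V}}) (e : {set V}) : {set {set V}} :=
  [set f in E | (f != e) && (f :&: e != set0)].

From HB Require Import structures.
From mathcomp Require Import all_boot all_order all_algebra.
From mathcomp Require Import ring lra.
Import Order.TTheory GRing.Theory Num.Theory.

(* The combinatorial heart is a double count: in a linear hypergraph every
   neighbour f of e meets e in exactly one vertex v_f, and (f, x) |-> (v_f, x)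
   is injective on pairs with x in f \ e.  Hence
       \sum_(f in N(e)) |f \ e|  <=  |e| * n.                          (1)
   Linearity also gives |f| <= |f \ e| + 1 for every neighbour f, so with
   D := r - 1 - a2 each "large" neighbour (|f| >= (1+a1) r) contributes at
   least (1+a1) D to (1), and each "medium" one (|f| >= r/(1+a2)) at least
   D/(1+a2).  Summing the two classes separately yields
       (1+a1) D m1 + D/(1+a2) m2  <=  r n.                             (2)
   Part (i) is (2) divided by D; part (ii) follows from (2) and the covering
   hypothesis m1 + m2 >= (1 - tau) n by linear arithmetic. *)

Section LinearNeighbourhood.

Context {V : finType} {E : {set {set V}}}.
Hypothesis linE : linear_hypergraph E.

Lemma pick_meet {e f : {set V}} : f :&: e != set0 ->
  exists v, [/\ [pick v in f :&: e] = Some v, v \in f & v \in e].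
Proof.
move=> /set0Pn [w Hw].
case: pickP => [v|/(_ w)]; last by rewrite Hw.
by rewrite inE => /andP[vf ve]; exists v.
Qed.

(* Double count (1): the pairs (f, x) with f in N(e) and x in f \ e inject
   into e * V, since two distinct edges sharing v_f and x would meet twice. *)
Lemma sum_nbhd_outside_le (e : {set V}) :
  \sum_(f in nbhd E e) #|f :\: e| <= #|e| * #|V|.
Proof.
have [_ lin] := linE.
pose P := [set p : {set V} * V | (p.1 \in nbhd E e) && (p.2 \in p.1 :\: e)].
have -> : \sum_(f in nbhd E e) #|f :\: e| = #|P|.
  rewrite -sum1_card (eq_bigr (fun f => \sum_(x in f :\: e) 1)%N); last first.
    by move=> f _; rewrite sum1_card.
  by rewrite pair_big_dep; apply: eq_bigl => -[f x]; rewrite !inE.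
pose h (p : {set V} * V) := (odflt p.2 [pick v in p.1 :&: e], p.2).
have injh : {in P &, injective h}.
  move=> [f x] [g y]; rewrite !inE /= => /andP[/and3P[fE _ fe] /andP[xe xf]].
  move=> /andP[/and3P[gE _ ge] /andP[_ yg]].
  have [v [pv vf ve]] := pick_meet fe; have [w [pw wg _]] := pick_meet ge.
  rewrite /h /= pv pw /= => -[vw xy]; subst w y.
  have [-> //|fg] := eqVneq f g.
  have two_common : [set v; x] \subset f :&: g.
    by apply/subsetP => z; rewrite !inE => /orP[] /eqP ->; rewrite ?vf ?wg ?xf ?yg.
  have vx : v != x by apply: contraNneq xe => <-.
  by have := leq_trans (subset_leq_card two_common) (lin f g fE gE fg); rewrite cards2 vx.
rewrite -(card_in_imset injh); apply: leq_trans (_ : #|setX e [set: V]| <= _).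
  apply/subset_leq_card/subsetP => _ /imsetP[[f x] + ->].
  rewrite !inE /= => /andP[/and3P[_ _ fe] _].
  by have [v [pv _ ve]] := pick_meet fe; rewrite /h /= pv /= ve.
by rewrite cardsX cardsT.
Qed.

Lemma card_nbhd_le (e f : {set V}) : e \in E -> f \in nbhd E e ->
  #|f| <= (#|f :\: e|).+1.
Proof.
have [_ lin] := linE.
move=> eE; rewrite inE => /and3P[fE fe _].
by rewrite -(cardsID e f) addnC -addn1 leq_add2l lin.
Qed.

End LinearNeighbourhood.

Local Open Scope ring_scope.

Lemma weighted_count_le_sum (R : numDomainType) (T : finType) (N : {set T})
    (p1 p2 : pred T) (x y : R) (c : T -> R) :
  (forall f, p1 f -> ~~ p2 f) ->
  (forall f, f \in N -> 0 <= c f) ->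
  (forall f, f \in N -> p1 f -> x <= c f) ->
  (forall f, f \in N -> p2 f -> y <= c f) ->
  x * #|[set f in N | p1 f]|%:R + y * #|[set f in N | p2 f]|%:R
    <= \sum_(f in N) c f.
Proof.
move=> disj c_ge0 c_ge_x c_ge_y.
have count_as_sum (p : pred T) (z : R) :
    z * #|[set f in N | p f]|%:R = \sum_(f in N) (if p f then z else 0).
  rewrite mulr_natr -sumr_const -big_mkcondr.
  by apply: eq_bigl => f; rewrite inE.
rewrite !count_as_sum -big_split /=; apply: ler_sum => f fN.
case p1f: (p1 f); first by rewrite (negbTE (disj f p1f)) addr0 c_ge_x.
by case: ifP => [/(c_ge_y f fN)|_]; rewrite add0r ?c_ge0.
Qed.

Lemma weighted_bound_div (R : realFieldType) (a1 a2 r n m1 m2 : R) :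
  0 <= a2 -> 1 + a2 < r ->
  (1 + a1) * (r - 1 - a2) * m1 + (r - 1 - a2) / (1 + a2) * m2 <= r * n ->
  (1 + a1) * m1 + m2 / (1 + a2) <= n + (1 + a2) * n / (r - 1 - a2).
Proof.
move=> a2_ge0 r_gt hw; have D_gt0 : 0 < r - 1 - a2 by lra.
have a2p_neq0 : 1 + a2 != 0 by rewrite gt_eqF //; lra.
have -> : n + (1 + a2) * n / (r - 1 - a2) = r * n / (r - 1 - a2).
  by field; rewrite gt_eqF.
rewrite ler_pdivlMr //; apply: le_trans hw; rewrite le_eqVlt; apply/orP; left.
by apply/eqP; field.
Qed.

Lemma weighted_bound_cover (R : realFieldType) (a1 a2 tau r n m1 m2 : R) :
  0 < a1 -> 0 <= a2 -> 0 <= n -> 0 <= m1 -> 0 <= m2 -> 1 + a2 < r ->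
  (1 + a1) * (r - 1 - a2) * m1 + (r - 1 - a2) / (1 + a2) * m2 <= r * n ->
  (1 - tau) * n <= m1 + m2 ->
  m1 <= (tau + (1 + a2) * (1 + a2 * r) / (r - 1 - a2)) * (n / a1).
Proof.
move=> a1_gt0 a2_ge0 n_ge0 m1_ge0 m2_ge0 r_gt hw cover.
set D := r - 1 - a2 in hw *; have D_gt0 : 0 < D by rewrite /D; lra.
have a2p_gt0 : 0 < 1 + a2 by lra.
set q := m2 / (1 + a2).
have m2_eq : m2 = (1 + a2) * q by rewrite /q mulrC divfK // gt_eqF.
have q_ge0 : 0 <= q by rewrite /q divr_ge0 // ltW.
have {}hw : (1 + a1) * D * m1 + D * q <= r * n by rewrite /q mulrA [D * m2 / _]mulrAC.
rewrite m2_eq in cover.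
(* a1 D m1 <= r n - D (m1 + q) <= r n - D (1 - tau) n + a2 D q, and D q <= r n. *)
have Dq_le : D * q <= r * n.
  by apply: le_trans hw; rewrite lerDr !mulr_ge0 //; lra.
have cover_D : D * ((1 - tau) * n) <= D * (m1 + (1 + a2) * q).
  by rewrite ler_wpM2l // ltW.
have scaled_bound : a1 * m1 * D <= (tau * D + (1 + a2) * (1 + a2 * r)) * n.
  have : 0 <= a2 * a2 * r * n by rewrite !mulr_ge0 //; lra.
  have : a2 * (D * q) <= a2 * (r * n) by rewrite ler_wpM2l.
  rewrite /D in hw cover_D *; nra.
have -> : (tau + (1 + a2) * (1 + a2 * r) / D) * (n / a1)
          = (tau * D + (1 + a2) * (1 + a2 * r)) * n / (a1 * D).
  by field; rewrite !gt_eqF.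
by rewrite ler_pdivlMr ?mulr_gt0 // mulrA (mulrC m1).
Qed.

Theorem proposition6p3 (R : realFieldType) (V : finType) (E : {set {set V}})
    (a1 a2 tau : R) (e : {set V}) :
  0 <= a1 -> 0 <= a2 -> 0 <= tau ->
  linear_hypergraph E ->
  (forall f, f \in E -> 1 + a2 <= (#|f|%:R : R)) ->
  e \in E ->
  let n : R := #|V|%:R in
  let r : R := #|e|%:R in
  let m1 : R := #|[set f in nbhd E e | (1 + a1) * r <= #|f|%:R]|%:R in
  let m2 : R := #|[set f in nbhd E e |
                   (#|f|%:R < (1 + a1) * r) && (r / (1 + a2) <= #|f|%:R)]|%:R in
  1 + a2 < r ->
  ((1 + a1) * m1 + m2 / (1 + a2) <= n + (1 + a2) * n / (r - 1 - a2)) /\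
  ((1 - tau) * n <= m1 + m2 -> 0 < a1 ->
   m1 <= (tau + (1 + a2) * (1 + a2 * r) / (r - 1 - a2)) * (n / a1)).
Proof.
move=> a1_ge0 a2_ge0 _ linE _ eE n r m1 m2 r_gt.
have a2p_gt0 : 0 < 1 + a2 by lra.
have card_le f : f \in nbhd E e -> (#|f|%:R : R) <= #|f :\: e|%:R + 1.
  by move=> fN; rewrite natr1 ler_nat (card_nbhd_le linE).
have sum_le : \sum_(f in nbhd E e) (#|f :\: e|%:R : R) <= r * n.
  by rewrite -natr_sum -natrM ler_nat (sum_nbhd_outside_le linE).
have weighted : (1 + a1) * (r - 1 - a2) * m1 + (r - 1 - a2) / (1 + a2) * m2
                <= r * n.
  apply: le_trans sum_le; apply: weighted_count_le_sum.
  - by move=> f; rewrite leNgt => /negbTE ->.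
  - by move=> f _; rewrite ler0n.
  - move=> f /card_le + large.
    have : (1 + a1) * (r - 1 - a2) = (1 + a1) * r - 1 - (a1 + a2 + a1 * a2).
      by ring.
    have : 0 <= a1 * a2 by rewrite mulr_ge0.
    lra.
  - move=> f /card_le + /andP[_ medium].
    have : (r - 1 - a2) / (1 + a2) = r / (1 + a2) - 1 by field; rewrite gt_eqF.
    lra.
split=> [|cover a1_gt0]; first exact: weighted_bound_div weighted.
by apply: weighted_bound_cover weighted cover; rewrite ?ler0n.
Qed.
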